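(* Let $g_1,g_2$ be monic divisors of $x^m-1$, $h_i=\frac{x^m-1}{g_i}$, $v_1,v_2\in\mathcal{R}$ with $\gcd(v_1v_2-1,x^m-1)=1$, and let $\mathcal{C}$ be the QC code of length $2m$ generated by $(g_1,v_1g_1)$ and $(v_2g_2,g_2)$. (A) Over $\mathbb{F}_q$, $\mathcal{C}$ is Euclidean self-orthogonal iff $h_1\mid\overline{g_1}(1+v_1\overline{v_1})$, $h_1\mid\overline{g_2}(\overline{v_2}+v_1)$ and $h_2\mid\overline{g_2}(1+v_2\overline{v_2})$. (B) Over $\mathbb{F}_{q^2}$, $\mathcal{C}$ is Hermitian self-orthogonal iff $h_1^{[q]}\mid\overline{g_1}(1+v_1^{[q]}\overline{v_1})$, $h_1^{[q]}\mid\overline{g_2}(\overline{v_2}+v_1^{[q]})$ and $h_2^{[q]}\mid\overline{g_2}(v_2^{[q]}\overline{v_2}+1)$. (C) Over $\mathbb{F}_q$, $\mathcal{C}$ is symplectic self-orthogonal iff $h_1\mid\overline{g_1}(\overline{v_1}-v_1)$, $h_1\mid\overline{g_2}(1-\overline{v_2}v_1)$ and $h_2\mid\overline{g_2}(v_2-\overline{v_2})$.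
   Context: $q$ is a prime power; $\mathbb{F}$ is $\mathbb{F}_q$ or $\mathbb{F}_{q^2}$ as indicated; $\mathcal{R}=\mathbb{F}[x]/(x^m-1)$ with elements identified with representatives of degree $<m$; $[k]=(k_0,\dots,k_{m-1})$ for $k=\sum k_ix^i$; $\overline{k}(x)=k(x^{-1})\bmod(x^m-1)$; $k^{[q]}=\sum k_i^qx^i$. For $h\mid x^m-1$, ''$h\mid a$'' for $a\in\mathcal{R}$ means $h$ divides the representative of $a$. The QC code generated by $(u_{i1},u_{i2})$, $i=1,2$, is $\{([r_1u_{11}+r_2u_{21}],[r_1u_{12}+r_2u_{22}]):r_1,r_2\in\mathcal{R}\}\subseteq\mathbb{F}^{2m}$. Inner products: Euclidean $\sum u_iv_i$; Hermitian $\sum u_i^qv_i$ (over $\mathbb{F}_{q^2}$); symplectic on $\mathbb{F}^{2m}$: $\sum_{i=1}^m(u_iv_{m+i}-u_{m+i}v_i)$. Self-orthogonal means $\mathcal{C}\subseteq\mathcal{C}^\perp$. *)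

From HB Require Import structures.
From mathcomp Require Import all_boot all_order all_algebra.
Set Implicit Arguments. Unset Strict Implicit. Unset Printing Implicit Defensive.
Import GRing.Theory.
Local Open Scope ring_scope.

Section QC.
Variable F : fieldType.

Definition xm1 (m : nat) : {poly F} := 'X^m - 1.

Definition rep (m : nat) (k : {poly F}) : {poly F} := k %% xm1 m.

Definition vec (m : nat) (k : {poly F}) : 'rV[F]_m := \row_(i < m) (rep m k)`_i.

(* \overline{k}(x) = k(x^{-1}) mod (x^m - 1) = sum_i k_i x^{(m-i) mod m} *)
Definition rbar (m : nat) (k : {poly F}) : {poly F} :=
  \sum_(i < m) (rep m k)`_i *: 'X^((m - i) %% m).

Definition frobq (q : nat) (k : {poly F}) : {poly F} := map_poly (fun a => a ^+ q) k.

Definition rdvd (m : nat) (h a : {poly F}) : bool := h %| rep m a.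

Definition word (m : nat) := ('rV[F]_m * 'rV[F]_m)%type.

Definition qc_code (m : nat) (u11 u12 u21 u22 : {poly F}) : word m -> Prop :=
  fun c => exists r1 r2 : {poly F}, (size r1 <= m)%N /\ (size r2 <= m)%N /\
    c = (vec m (r1 * u11 + r2 * u21), vec m (r1 * u12 + r2 * u22)).

(* inner products on F^{2m}, a word being (first m coords, last m coords) *)
Definition euclid_ip (m : nat) (u v : word m) : F :=
  \sum_(i < m) u.1 0 i * v.1 0 i + \sum_(i < m) u.2 0 i * v.2 0 i.

Definition herm_ip (q m : nat) (u v : word m) : F :=
  \sum_(i < m) u.1 0 i ^+ q * v.1 0 i + \sum_(i < m) u.2 0 i ^+ q * v.2 0 i.

Definition symp_ip (m : nat) (u v : word m) : F :=
  \sum_(i < m) (u.1 0 i * v.2 0 i - u.2 0 i * v.1 0 i).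

Definition dual (m : nat) (ip : word m -> word m -> F) (C : word m -> Prop) : word m -> Prop :=
  fun v => forall u, C u -> ip u v = 0.

Definition self_orthogonal (m : nat) (ip : word m -> word m -> F) (C : word m -> Prop) : Prop :=
  forall c, C c -> dual ip C c.

End QC.

Arguments rep {F} m k.
Arguments vec {F} m k.
Arguments rbar {F} m k.
Arguments frobq {F} q k.
Arguments rdvd {F} m h a.
Arguments qc_code {F} m u11 u12 u21 u22 _.
Arguments euclid_ip {F} m u v.
Arguments herm_ip {F} q m u v.
Arguments symp_ip {F} m u v.
Arguments dual {F} m ip C v.
Arguments self_orthogonal {F} m ip C.

From HB Require Import structures.
From mathcomp Require Import all_boot all_order all_algebra all_field.
From mathcomp Require Import ring.
Import GRing.Theory.
Local Open Scope ring_scope.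
Set Implicit Arguments. Unset Strict Implicit. Unset Printing Implicit Defensive.

(* Work in the quotient ring R = F[x]/(x^m - 1), realized as [{poly %/ x^m - 1}].  There the
   reversal k |-> \overline{k} is the ring involution x |-> x^(m-1) = x^-1, and applying a
   field involution sigma (the identity, or a |-> a^q) to the coefficients is a ring
   involution commuting with it.  The dot product of the coefficient vectors of y and z is
   the constant term of \overline{y} z, a nondegenerate pairing, so each of the three inner
   products of codewords reads (x, y) |-> (tau(x) G y^T)_0 for a ring involution tau of R and
   a 2x2 matrix G over R.  Hence the R-span of the rows of the generator matrix U is
   self-orthogonal iff the Gram matrix tau(U) G U^T vanishes.  As h g = x^m - 1, the
   condition h | a means g a = 0 in R, and the three conditions of the theorem are, up to an
   involution, the (1,1), (2,1) and (2,2) entries of the Gram matrix; the (1,2) entry is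
   +-tau of the (2,1) entry.  The Euclidean case is the Hermitian one for sigma = id. *)

Lemma poly_sum_coefX (R : nzSemiRingType) (p : {poly R}) n :
  (size p <= n)%N -> p = \sum_(i < n) p`_i *: 'X^i.
Proof.
move=> le_pn; rewrite -poly_def; apply/polyP => k; rewrite coef_poly.
by case: ltnP => // le_nk; rewrite nth_default // (leq_trans le_pn).
Qed.

Section TwoByTwo.
Variable R : comNzRingType.

Definition mx2 (a b c d : R) : 'M[R]_2 :=
  \matrix_(i, j) if i == 0 then if j == 0 then a else b else if j == 0 then c else d.

Lemma ord2P (i : 'I_2) : i = 0 \/ i = 1.
Proof. by case: i => [[|[|//]] ?]; [left | right]; apply: val_inj. Qed.

Lemma mx2_eq0 (M : 'M[R]_2) :
  (M == 0) = [&& M 0 0 == 0, M 0 1 == 0, M 1 0 == 0 & M 1 1 == 0].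
Proof.
apply/eqP/and4P => [-> | [/eqP M00 /eqP M01 /eqP M10 /eqP M11]]; first by rewrite !mxE.
by apply/matrixP => i j; rewrite mxE; case: (ord2P i) => ->; case: (ord2P j) => ->.
Qed.

Lemma mx2_eq0_lower (M : 'M[R]_2) (f : R -> R) : f 0 = 0 -> M 0 1 = f (M 1 0) ->
  (M == 0) = [&& M 0 0 == 0, M 1 0 == 0 & M 1 1 == 0].
Proof.
move=> f0 M01; rewrite mx2_eq0 M01.
by case: (M 1 0 =P 0) => [->|_]; rewrite ?f0 ?eqxx /= ?andbF.
Qed.

Lemma mulmx2E m n (A : 'M[R]_(m, 2)) (B : 'M[R]_(2, n)) i j :
  (A *m B) i j = A i 0 * B 0 j + A i 1 * B 1 j.
Proof.
by rewrite mxE !big_ord_recl big_ord0 addr0 (_ : lift ord0 ord0 = 1) //; apply: val_inj.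
Qed.

Definition symplectic_mx : 'M[R]_2 := mx2 0 1 (-1) 0.

End TwoByTwo.

Section GramCriterion.
Variables (R : comNzRingType) (V : zmodType) (kappa : R -> V).
Hypothesis kappa0 : kappa 0 = 0.
Hypothesis kappa_nondeg : forall z, (forall r, kappa (r * z) = 0) -> z = 0.
Variables (tau : {rmorphism R -> R}) (k n : nat) (G : 'M[R]_n).

Definition gram (U : 'M[R]_(k, n)) := map_mx tau U *m G *m U^T.

Lemma gram_eq0P (U : 'M[R]_(k, n)) :
  (forall r s : 'rV[R]_k, kappa ((map_mx tau (r *m U) *m G *m (s *m U)^T) 0 0) = 0)
  <-> gram U = 0.
Proof.
have formE r s : map_mx tau (r *m U) *m G *m (s *m U)^T = map_mx tau r *m gram U *m s^T.
  by rewrite map_mxM trmx_mul !mulmxA.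
split=> [orth | gram0 r s]; last by rewrite formE gram0 mulmx0 mul0mx mxE kappa0.
apply/matrixP => i j; rewrite [RHS]mxE; apply: kappa_nondeg => c.
have := orth (delta_mx 0 i) (c *: delta_mx 0 j).
by rewrite formE map_delta_mx -rowE linearZ /= trmx_delta -scalemxAr -colE !mxE.
Qed.

End GramCriterion.

Lemma gram1E (R : comNzRingType) (tau : {rmorphism R -> R}) (U : 'M[R]_2) i j :
  gram tau 1%:M U i j = tau (U i 0) * U j 0 + tau (U i 1) * U j 1.
Proof. by rewrite /gram mulmx1 mulmx2E !mxE. Qed.

Lemma gram_symplecticE (R : comNzRingType) (tau : {rmorphism R -> R}) (U : 'M[R]_2) i j :
  gram tau (symplectic_mx R) U i j = tau (U i 0) * U j 1 - tau (U i 1) * U j 0.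
Proof. by rewrite /gram !mulmx2E !mxE eqxx oner_eq0; ring. Qed.

Section CyclicQuotient.
Variables (F : fieldType) (m : nat).
Hypothesis m_gt0 : (0 < m)%N.

Local Notation R := {poly %/ xm1 F m}.
Local Notation qpi := (in_qpoly (xm1 F m)).
Local Notation qX := (qpi 'X).

Lemma xm1_monic : xm1 F m \is monic.
Proof. exact: monicXnsubC. Qed.

Lemma size_xm1 : size (xm1 F m) = m.+1.
Proof. exact: size_XnsubC. Qed.

Lemma mk_monic_xm1 : mk_monic (xm1 F m) = xm1 F m.
Proof. by rewrite /mk_monic size_xm1 ltnS m_gt0 xm1_monic. Qed.

Lemma qpiE p : qpi p = rep m p :> {poly F}.
Proof. by rewrite /= mk_monic_xm1 -Pdiv.IdomainMonic.modpE ?xm1_monic. Qed.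

Lemma size_qpoly (z : R) : (size (z : {poly F}) <= m)%N.
Proof. by rewrite -ltnS -size_xm1 -{2}mk_monic_xm1 size_mk_monic. Qed.

Lemma qpi_val (z : R) : qpi z = z.
Proof. by apply: val_inj; rewrite [val _]qpiE /rep modp_small // size_xm1 ltnS size_qpoly. Qed.

Lemma qpi_rep p : qpi (rep m p) = qpi p.
Proof. by apply: val_inj; rewrite ![val _]qpiE /rep modp_id. Qed.

Lemma qpi_eq0 p : (qpi p == 0) = (xm1 F m %| p).
Proof. by rewrite -val_eqE [val _]qpiE. Qed.

Lemma qX_expm : qX ^+ m = 1.
Proof.
by apply/eqP; have := qpi_eq0 (xm1 F m); rewrite dvdpp rmorphB rmorphXn rmorph1 subr_eq0.
Qed.

Lemma qX_expn_mod i j : i = j %[mod m] -> qX ^+ i = qX ^+ j.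
Proof. by move=> eq_ij; rewrite -(expr_mod i qX_expm) eq_ij expr_mod // qX_expm. Qed.

Lemma val_qX_expn i : (i < m)%N -> qX ^+ i = 'X^i :> {poly F}.
Proof. by move=> lt_im; rewrite -rmorphXn qpiE /rep modp_small // size_polyXn size_xm1. Qed.

Lemma qpoly_expand (z : R) : z = \sum_(i < m) (z : {poly F})`_i *: qX ^+ i.
Proof.
rewrite -{1}[z]qpi_val {1}(poly_sum_coefX (size_qpoly z)) linear_sum.
by apply: eq_bigr => i _; rewrite linearZ rmorphXn.
Qed.

Lemma qpi_comp p q : qpi (p \Po q) = \sum_(i < size p) p`_i *: qpi q ^+ i.
Proof. by rewrite comp_polyE linear_sum; apply: eq_bigr => i _; rewrite linearZ rmorphXn. Qed.

Lemma qpi_comp_eql p1 p2 q :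
  qpi p1 = qpi p2 -> qpi q ^+ m = 1 -> qpi (p1 \Po q) = qpi (p2 \Po q).
Proof.
move=> /eqP; rewrite -subr_eq0 -rmorphB qpi_eq0 => /dvdpP[d eq_d] qm1.
apply/eqP; rewrite -subr_eq0 -rmorphB -comp_polyB eq_d comp_polyM rmorphM.
by rewrite /xm1 comp_polyB comp_Xn_poly comp_polyC rmorphB rmorphXn rmorph1 qm1 subrr mulr0.
Qed.

Lemma qpi_comp_eqr p q1 q2 : qpi q1 = qpi q2 -> qpi (p \Po q1) = qpi (p \Po q2).
Proof. by move=> eq_q; rewrite !qpi_comp eq_q. Qed.

(* x |-> x^(m-1) = x^-1; on representatives this is the reversal [rbar] ([qpi_rbar]). *)
Definition qbar (z : R) : R := qpi ((z : {poly F}) \Po 'X^(m.-1)).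
Arguments qbar : simpl never.

Lemma qbar_qpi p : qbar (qpi p) = qpi (p \Po 'X^(m.-1)).
Proof.
apply: qpi_comp_eql; first by rewrite qpi_val.
by rewrite rmorphXn -exprM mulnC exprM qX_expm expr1n.
Qed.

Lemma qbar_is_linear : linear qbar.
Proof. by move=> c z w; rewrite /qbar raddfD /= linearZ /= linearP. Qed.

Lemma qbar_is_monoid_morphism : monoid_morphism qbar.
Proof.
split=> [|z w]; first by have := qbar_qpi 1; rewrite !rmorph1.
by rewrite -[z]qpi_val -[w]qpi_val -rmorphM !qbar_qpi rmorphM rmorphM.
Qed.

#[local] HB.instance Definition _ := GRing.isSemilinear.Build F R R _ qbar
  (GRing.semilinear_linear qbar_is_linear).
#[local] HB.instance Definition _ :=
  GRing.isMonoidMorphism.Build R R qbar qbar_is_monoid_morphism.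

Lemma qbar_qX_expn i : qbar (qX ^+ i) = qX ^+ (m.-1 * i).
Proof. by rewrite rmorphXn /= qbar_qpi comp_polyX !rmorphXn -exprM. Qed.

Lemma predn_sqr_mod : (m.-1 * m.-1 = 1 %[mod m])%N.
Proof.
by apply/eqP; rewrite -(eqn_modDr m.-1) -mulnSr add1n prednK // modnMl modnn.
Qed.

Lemma qbarK : involutive qbar.
Proof.
move=> z; rewrite -{1}[z]qpi_val !qbar_qpi -comp_polyA comp_Xn_poly -exprM.
rewrite -[RHS]qpi_val -{2}[z : {poly F}]comp_polyXr; apply: qpi_comp_eqr.
by rewrite rmorphXn -[RHS]expr1; apply: qX_expn_mod; apply: predn_sqr_mod.
Qed.

Lemma predn_mul_mod i : (i < m)%N -> (m.-1 * i = (m - i) %% m %[mod m])%N.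
Proof.
move=> lt_im; apply/eqP; rewrite -(eqn_modDr i) -mulSnr prednK // modnMr.
by rewrite modnDml subnK ?(ltnW lt_im) // modnn.
Qed.

Lemma qpi_rbar p : qpi (rbar m p) = qbar (qpi p).
Proof.
rewrite /rbar linear_sum [in RHS](qpoly_expand (qpi p)) linear_sum.
apply: eq_bigr => i _; rewrite qpiE !linearZ /= qbar_qX_expn rmorphXn.
by congr (_ *: _); apply: qX_expn_mod; rewrite predn_mul_mod.
Qed.

Lemma coef0_qX_expn k : (qX ^+ k : {poly F})`_0 = ((k %% m)%N == 0%N)%:R.
Proof.
by rewrite (qX_expn_mod (esym (modn_mod k m))) val_qX_expn ?ltn_pmod // coefXn eq_sym.
Qed.

Lemma predn_mul_add_mod_eq0 (i j : 'I_m) : ((m.-1 * i + j) %% m == 0)%N = (i == j).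
Proof.
rewrite -[0%N](mod0n m) -(eqn_modDl i) addn0 addnA -mulSn.
by rewrite prednK // mulnC modnMDl !modn_small ?ltn_ord // eq_sym.
Qed.

Lemma qbarE (y : R) : qbar y = \sum_(i < m) (y : {poly F})`_i *: qX ^+ (m.-1 * i).
Proof.
rewrite {1}[y]qpoly_expand linear_sum.
by apply: eq_bigr => i _; rewrite linearZ /= qbar_qX_expn.
Qed.

Lemma coef0_qbarM (y z : R) :
  (qbar y * z : {poly F})`_0 = \sum_(i < m) (y : {poly F})`_i * (z : {poly F})`_i.
Proof.
rewrite qbarE {1}[z]qpoly_expand mulr_suml poly_of_qpoly_sum coef_sum.
apply: eq_bigr => i _; rewrite mulr_sumr poly_of_qpoly_sum coef_sum (bigD1 i) //.
rewrite big1 ?Monoid.mulm1 => [|j /negbTE ne_ji];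
  rewrite -scalerAl -scalerAr -exprD !poly_of_qpolyZ !coefZ coef0_qX_expn.
  by rewrite (predn_mul_add_mod_eq0 i i) eqxx mulr1.
by rewrite (predn_mul_add_mod_eq0 i j) eq_sym ne_ji mulr0n !mulr0.
Qed.

Lemma qpoly_coef0_nondeg (z : R) : (forall r : R, (r * z : {poly F})`_0 = 0) -> z = 0.
Proof.
move=> z_orth; apply: val_inj; apply/polyP => k; rewrite coef0.
have [lt_km | le_mk] := ltnP k m; last first.
  by rewrite nth_default // (leq_trans (size_qpoly z)).
have := z_orth (qbar (qX ^+ k)); rewrite coef0_qbarM (bigD1 (Ordinal lt_km)) //.
rewrite big1 ?Monoid.mulm1 => [|i]; rewrite ?val_qX_expn // coefXn.
  by rewrite eqxx mul1r.
by rewrite -val_eqE => /negbTE ->; rewrite mul0r.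
Qed.

Lemma rdvd_qpiE h g Y : g != 0 -> h * g = xm1 F m -> rdvd m h Y = (qpi (g * Y) == 0).
Proof.
move=> nz_g def_xm1; rewrite /rdvd /rep -dvdp_mod -?def_xm1 ?dvdp_mulr //.
by rewrite -(dvdp_mul2r _ _ nz_g) def_xm1 mulrC -qpi_eq0.
Qed.

Definition qrow (z : R) : 'rV[F]_m := \row_(i < m) (z : {poly F})`_i.

Definition qword (x : 'rV[R]_2) : word F m := (qrow (x 0 0), qrow (x 0 1)).

Lemma vec_qrow p : vec m p = qrow (qpi p).
Proof. by apply/rowP => i; rewrite !mxE qpiE. Qed.

Lemma qc_codeP u11 u12 u21 u22 c :
  qc_code m u11 u12 u21 u22 c <->
  exists r : 'rV[R]_2, c = qword (r *m mx2 (qpi u11) (qpi u12) (qpi u21) (qpi u22)).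
Proof.
split=> [[r1 [r2 [_ [_ ->]]]] | [r ->]].
  exists (\row_j if j == 0 then qpi r1 else qpi r2).
  by rewrite /qword !mulmx2E !mxE eqxx oner_eq0 !vec_qrow !in_qpolyD !in_qpolyM.
exists (r 0 0 : {poly F}), (r 0 1 : {poly F}); rewrite !size_qpoly !vec_qrow.
by rewrite /qword !mulmx2E !mxE eqxx oner_eq0 !in_qpolyD !in_qpolyM !qpi_val.
Qed.

Lemma qc_code_self_orthogonalP (ip : word F m -> word F m -> F)
    (tau : {rmorphism R -> R}) (G : 'M[R]_2) :
  (forall x y, ip (qword x) (qword y) = ((map_mx tau x *m G *m y^T) 0 0 : {poly F})`_0) ->
  forall u11 u12 u21 u22, self_orthogonal m ip (qc_code m u11 u12 u21 u22) <->
  gram tau G (mx2 (qpi u11) (qpi u12) (qpi u21) (qpi u22)) = 0.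
Proof.
move=> ipE u11 u12 u21 u22.
have kappa0 : ((0 : R) : {poly F})`_0 = 0 by rewrite raddf0 coef0.
rewrite -(@gram_eq0P _ _ (fun z : R => (z : {poly F})`_0) kappa0 qpoly_coef0_nondeg).
split=> [orth r s | orth c /qc_codeP[s ->] u /qc_codeP[r ->]]; last by rewrite ipE.
by rewrite -ipE; apply: orth; apply/qc_codeP; [exists s | exists r].
Qed.

Lemma rdvd_monicE g Y : g \is monic -> g %| xm1 F m ->
  rdvd m (xm1 F m %/ g) Y = (qpi (g * Y) == 0).
Proof. by move=> g_monic /divpK def_xm1; rewrite (rdvd_qpiE _ (monic_neq0 g_monic)). Qed.

Lemma symp_ipE x y : symp_ip m (qword x) (qword y) =
  ((map_mx qbar x *m symplectic_mx R *m y^T) 0 0 : {poly F})`_0.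
Proof.
have -> : (map_mx qbar x *m symplectic_mx R *m y^T) 0 0 =
    qbar (x 0 0) * y 0 1 - qbar (x 0 1) * y 0 0.
  by rewrite !mulmx2E !mxE eqxx oner_eq0; ring.
rewrite raddfB coefB !coef0_qbarM -sumrB.
by apply: eq_bigr => i _; rewrite !mxE.
Qed.

Lemma symp_ip_self_orthogonalP (g1 g2 v1 v2 : {poly F}) :
  g1 \is monic -> g1 %| xm1 F m -> g2 \is monic -> g2 %| xm1 F m ->
  let h1 := xm1 F m %/ g1 in let h2 := xm1 F m %/ g2 in
  self_orthogonal m (symp_ip m) (qc_code m g1 (v1 * g1) (v2 * g2) g2) <->
  [/\ rdvd m h1 (rbar m g1 * (rbar m v1 - v1)),
      rdvd m h1 (rbar m g2 * (1 - rbar m v2 * v1)) &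
      rdvd m h2 (rbar m g2 * (v2 - rbar m v2))].
Proof.
move=> g1_monic g1_dvd g2_monic g2_dvd h1 h2.
rewrite (qc_code_self_orthogonalP symp_ipE) (rwP eqP) (rwP and3P) !rdvd_monicE //.
set M := gram _ _ _.
have [E00 E10 E11] : [/\ M 0 0 = - qpi (g1 * (rbar m g1 * (rbar m v1 - v1))),
    M 1 0 = - qpi (g1 * (rbar m g2 * (1 - rbar m v2 * v1))) &
    M 1 1 = - qpi (g2 * (rbar m g2 * (v2 - rbar m v2)))].
  by split; rewrite /M gram_symplecticE !mxE eqxx oner_eq0 /=
    !(rmorphM, rmorphB, rmorph1) /= !qpi_rbar; ring.
have M01 : M 0 1 = - qbar (M 1 0).
  by rewrite /M !gram_symplecticE !mxE eqxx oner_eq0 /= !(rmorphM, rmorphB) /= !qbarK; ring.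
rewrite (@mx2_eq0_lower _ M (fun z => - qbar z) _ M01) ?raddf0 ?oppr0 //.
by rewrite E00 E10 E11 !oppr_eq0.
Qed.

Definition hermitian_ip (sigma : F -> F) (u v : word F m) : F :=
  \sum_(i < m) sigma (u.1 0 i) * v.1 0 i + \sum_(i < m) sigma (u.2 0 i) * v.2 0 i.

Section Conjugation.
Variable sigma : {rmorphism F -> F}.

Definition qmap (z : R) : R := qpi (map_poly sigma z).
Arguments qmap : simpl never.

Lemma map_xm1 : map_poly sigma (xm1 F m) = xm1 F m.
Proof. by rewrite rmorphB /= map_polyXn rmorph1. Qed.

Lemma qmap_qpi p : qmap (qpi p) = qpi (map_poly sigma p).
Proof. by rewrite /qmap qpiE /rep map_modp map_xm1; apply: qpi_rep. Qed.

Lemma qmap_is_zmod_morphism : zmod_morphism qmap.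
Proof. by move=> z w; rewrite /qmap raddfB /= !rmorphB. Qed.

Lemma qmap_is_monoid_morphism : monoid_morphism qmap.
Proof.
split=> [|z w]; first by have := qmap_qpi 1; rewrite !rmorph1.
by rewrite -[z]qpi_val -[w]qpi_val -rmorphM !qmap_qpi !rmorphM.
Qed.

#[local] HB.instance Definition _ :=
  GRing.isZmodMorphism.Build R R qmap qmap_is_zmod_morphism.
#[local] HB.instance Definition _ :=
  GRing.isMonoidMorphism.Build R R qmap qmap_is_monoid_morphism.

Lemma coef_qmap (z : R) i : (qmap z : {poly F})`_i = sigma (z : {poly F})`_i.
Proof.
by rewrite /qmap qpiE /rep modp_small ?coef_map // size_map_poly size_xm1 ltnS size_qpoly.
Qed.

Lemma qbar_qmap z : qbar (qmap z) = qmap (qbar z).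
Proof. by rewrite -[z]qpi_val qmap_qpi !qbar_qpi qmap_qpi map_comp_poly map_polyXn. Qed.

Hypothesis sigmaK : involutive sigma.

Lemma map_polyK : involutive (map_poly sigma).
Proof. by move=> p; apply/polyP => i; rewrite !coef_map; apply: sigmaK. Qed.

Lemma qmapK : involutive qmap.
Proof. by move=> z; rewrite -{1}[z]qpi_val !qmap_qpi map_polyK qpi_val. Qed.

Lemma hermitian_ipE x y : hermitian_ip sigma (qword x) (qword y) =
  ((map_mx (qbar \o qmap) x *m 1%:M *m y^T) 0 0 : {poly F})`_0.
Proof.
rewrite mulmx1 mulmx2E !mxE poly_of_qpolyD coefD !coef0_qbarM.
by congr (_ + _); apply: eq_bigr => i _; rewrite !mxE coef_qmap.
Qed.

Lemma rdvd_map_monicE g Y : g \is monic -> g %| xm1 F m ->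
  rdvd m (map_poly sigma (xm1 F m %/ g)) Y = (qpi (g * map_poly sigma Y) == 0).
Proof.
move=> g_monic /divpK def_xm1.
rewrite (@rdvd_qpiE _ (map_poly sigma g)) ?map_poly_eq0 ?monic_neq0 //; last first.
  by rewrite -rmorphM def_xm1 /= map_xm1.
rewrite -[g in RHS]map_polyK -rmorphM -qmap_qpi [RHS]raddf_eq0 //.
exact: can_inj qmapK.
Qed.

Lemma hermitian_ip_self_orthogonalP (g1 g2 v1 v2 : {poly F}) :
  g1 \is monic -> g1 %| xm1 F m -> g2 \is monic -> g2 %| xm1 F m ->
  let h1 := xm1 F m %/ g1 in let h2 := xm1 F m %/ g2 in
  self_orthogonal m (hermitian_ip sigma) (qc_code m g1 (v1 * g1) (v2 * g2) g2) <->
  [/\ rdvd m (map_poly sigma h1) (rbar m g1 * (1 + map_poly sigma v1 * rbar m v1)),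
      rdvd m (map_poly sigma h1) (rbar m g2 * (rbar m v2 + map_poly sigma v1)) &
      rdvd m (map_poly sigma h2) (rbar m g2 * (map_poly sigma v2 * rbar m v2 + 1))].
Proof.
move=> g1_monic g1_dvd g2_monic g2_dvd h1 h2.
rewrite (qc_code_self_orthogonalP hermitian_ipE) (rwP eqP) (rwP and3P) !rdvd_map_monicE //.
set M := gram _ _ _.
have [E00 E10 E11] : [/\
    M 0 0 = qpi (g1 * map_poly sigma (rbar m g1 * (1 + map_poly sigma v1 * rbar m v1))),
    M 1 0 = qpi (g1 * map_poly sigma (rbar m g2 * (rbar m v2 + map_poly sigma v1))) &
    M 1 1 = qpi (g2 * map_poly sigma (rbar m g2 * (map_poly sigma v2 * rbar m v2 + 1)))].
  by split; rewrite /M gram1E !mxE eqxx oner_eq0 /= !(rmorphM, rmorphD, rmorph1) /=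
    map_polyK -!qmap_qpi !qpi_rbar !qbar_qmap; ring.
have M01 : M 0 1 = qbar (qmap (M 1 0)).
  rewrite /M !gram1E !mxE eqxx oner_eq0 /= !(rmorphM, rmorphD) /=.
  by rewrite !qbar_qmap !qmapK !qbarK; ring.
rewrite (@mx2_eq0_lower _ M (fun z => qbar (qmap z)) _ M01) ?raddf0 //.
by rewrite E00 E10 E11.
Qed.

End Conjugation.

Lemma euclid_ip_self_orthogonalP (g1 g2 v1 v2 : {poly F}) :
  g1 \is monic -> g1 %| xm1 F m -> g2 \is monic -> g2 %| xm1 F m ->
  let h1 := xm1 F m %/ g1 in let h2 := xm1 F m %/ g2 in
  self_orthogonal m (euclid_ip m) (qc_code m g1 (v1 * g1) (v2 * g2) g2) <->
  [/\ rdvd m h1 (rbar m g1 * (1 + v1 * rbar m v1)),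
      rdvd m h1 (rbar m g2 * (rbar m v2 + v1)) &
      rdvd m h2 (rbar m g2 * (1 + v2 * rbar m v2))].
Proof.
move=> g1_monic g1_dvd g2_monic g2_dvd h1 h2.
have map_idfun p : map_poly (@idfun F) p = p by apply: map_poly_id.
have := @hermitian_ip_self_orthogonalP [the {rmorphism F -> F} of idfun] (fun _ => erefl)
  _ _ v1 v2 g1_monic g1_dvd g2_monic g2_dvd.
by move=> /=; rewrite !map_idfun (addrC _ 1).
Qed.

End CyclicQuotient.

Section FrobeniusPower.
Variables (F : finFieldType) (q : nat).
Hypothesis card_F : #|F| = (q ^ 2)%N.

Lemma pchar_nat_sqrt_card : [pchar F].-nat q.
Proof.
have [p _ pchar_p] := finPcharP F.
rewrite (eq_pnat _ (pcharf_eq pchar_p)); apply: (@pnat_dvd _ #|F|).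
  by rewrite card_F expnS dvdn_mulr.
by rewrite (card_pprimeChar pchar_p) pnatX pnat_id ?(pcharf_prime pchar_p) ?orbT.
Qed.

Definition frobenius_pow (a : F) : F := a ^+ q.

Lemma frobenius_pow_is_zmod_morphism : zmod_morphism frobenius_pow.
Proof.
move=> a b; apply/eqP; rewrite /frobenius_pow eq_sym subr_eq.
by rewrite -exprDn_pchar ?pchar_nat_sqrt_card // subrK.
Qed.

Lemma frobenius_pow_is_monoid_morphism : monoid_morphism frobenius_pow.
Proof. by split=> [|a b]; rewrite /frobenius_pow ?expr1n ?exprMn. Qed.

#[local] HB.instance Definition _ := GRing.isZmodMorphism.Build F F frobenius_pow
  frobenius_pow_is_zmod_morphism.
#[local] HB.instance Definition _ := GRing.isMonoidMorphism.Build F F frobenius_pow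
  frobenius_pow_is_monoid_morphism.

Lemma frobenius_powK : involutive frobenius_pow.
Proof. by move=> a; rewrite /frobenius_pow -exprM mulnn -card_F expf_card. Qed.

Lemma herm_ip_self_orthogonalP (m : nat) (g1 g2 v1 v2 : {poly F}) : (0 < m)%N ->
  g1 \is monic -> g1 %| xm1 F m -> g2 \is monic -> g2 %| xm1 F m ->
  let h1 := xm1 F m %/ g1 in let h2 := xm1 F m %/ g2 in
  self_orthogonal m (herm_ip q m) (qc_code m g1 (v1 * g1) (v2 * g2) g2) <->
  [/\ rdvd m (frobq q h1) (rbar m g1 * (1 + frobq q v1 * rbar m v1)),
      rdvd m (frobq q h1) (rbar m g2 * (rbar m v2 + frobq q v1)) &
      rdvd m (frobq q h2) (rbar m g2 * (frobq q v2 * rbar m v2 + 1))].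
Proof. by move=> m_gt0; apply: (hermitian_ip_self_orthogonalP m_gt0 frobenius_powK). Qed.

End FrobeniusPower.

Theorem mainTheorem4 :
  (* (A) Euclidean, over F_q *)
  (forall (F : finFieldType) (m : nat) (g1 g2 v1 v2 : {poly F}),
    (0 < m)%N ->
    g1 \is monic -> g1 %| xm1 F m -> g2 \is monic -> g2 %| xm1 F m ->
    (size v1 <= m)%N -> (size v2 <= m)%N ->
    coprimep (rep m (v1 * v2 - 1)) (xm1 F m) ->
    let h1 := xm1 F m %/ g1 in let h2 := xm1 F m %/ g2 in
    self_orthogonal m (euclid_ip m) (qc_code m g1 (v1 * g1) (v2 * g2) g2) <->
    [/\ rdvd m h1 (rbar m g1 * (1 + v1 * rbar m v1)),
        rdvd m h1 (rbar m g2 * (rbar m v2 + v1)) &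
        rdvd m h2 (rbar m g2 * (1 + v2 * rbar m v2))]) /\
  (* (B) Hermitian, over F_{q^2} *)
  (forall (F : finFieldType) (q m : nat) (g1 g2 v1 v2 : {poly F}),
    #|F| = (q ^ 2)%N -> (0 < m)%N ->
    g1 \is monic -> g1 %| xm1 F m -> g2 \is monic -> g2 %| xm1 F m ->
    (size v1 <= m)%N -> (size v2 <= m)%N ->
    coprimep (rep m (v1 * v2 - 1)) (xm1 F m) ->
    let h1 := xm1 F m %/ g1 in let h2 := xm1 F m %/ g2 in
    self_orthogonal m (herm_ip q m) (qc_code m g1 (v1 * g1) (v2 * g2) g2) <->
    [/\ rdvd m (frobq q h1) (rbar m g1 * (1 + frobq q v1 * rbar m v1)),
        rdvd m (frobq q h1) (rbar m g2 * (rbar m v2 + frobq q v1)) &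
        rdvd m (frobq q h2) (rbar m g2 * (frobq q v2 * rbar m v2 + 1))]) /\
  (* (C) symplectic, over F_q *)
  (forall (F : finFieldType) (m : nat) (g1 g2 v1 v2 : {poly F}),
    (0 < m)%N ->
    g1 \is monic -> g1 %| xm1 F m -> g2 \is monic -> g2 %| xm1 F m ->
    (size v1 <= m)%N -> (size v2 <= m)%N ->
    coprimep (rep m (v1 * v2 - 1)) (xm1 F m) ->
    let h1 := xm1 F m %/ g1 in let h2 := xm1 F m %/ g2 in
    self_orthogonal m (symp_ip m) (qc_code m g1 (v1 * g1) (v2 * g2) g2) <->
    [/\ rdvd m h1 (rbar m g1 * (rbar m v1 - v1)),
        rdvd m h1 (rbar m g2 * (1 - rbar m v2 * v1)) &
        rdvd m h2 (rbar m g2 * (v2 - rbar m v2))]).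
Proof.
split; [|split].
- move=> F m g1 g2 v1 v2 m_gt0 g1_monic g1_dvd g2_monic g2_dvd _ _ _.
  exact: euclid_ip_self_orthogonalP.
- move=> F q m g1 g2 v1 v2 card_F m_gt0 g1_monic g1_dvd g2_monic g2_dvd _ _ _.
  exact: herm_ip_self_orthogonalP.
- move=> F m g1 g2 v1 v2 m_gt0 g1_monic g1_dvd g2_monic g2_dvd _ _ _.
  exact: symp_ip_self_orthogonalP.
Qed.
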